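(* Let $a,b,c,d,e,f$ be positive reals such that $\mathrm{Anth}(a,b)$, $\mathrm{Anth}(e,f)$, $\mathrm{Anth}(b,c)$, $\mathrm{Anth}(d,e)$, $\mathrm{Anth}(a,c)$, $\mathrm{Anth}(d,f)$ are all finite or eventually periodic, with $\mathrm{Anth}(a,b)=\mathrm{Anth}(e,f)$ and $\mathrm{Anth}(b,c)=\mathrm{Anth}(d,e)$. Then $\mathrm{Anth}(a,c)=\mathrm{Anth}(d,f)$.
   Context: For positive reals $a,b$, the anthyphairesis of $a$ to $b$ is the Euclidean subtraction algorithm: set $e_{-1}=a$, $e_0=b$, and for $i\ge 0$, as long as $e_i>0$, write $e_{i-1}=k_i e_i+e_{i+1}$ with $k_i$ a nonnegative integer and $0\le e_{i+1}<e_i$; the process stops if some remainder is $0$. $\mathrm{Anth}(a,b)=[k_0,k_1,\dots]$ is the sequence of quotients; it is finite if the process stops, and eventually periodic if it is infinite and there exist $N\ge0$, $p\ge1$ with $k_{i+p}=k_i$ for all $i\ge N$. *)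

From HB Require Import structures.
From mathcomp Require Import all_boot all_order all_algebra.
From mathcomp Require Import reals.
Set Implicit Arguments. Unset Strict Implicit. Unset Printing Implicit Defensive.
Import Order.TTheory GRing.Theory Num.Theory.
Local Open Scope ring_scope.

Section Anth.
Variable R : realType.

(* One step of the Euclidean subtraction algorithm on the pair
   (e_{i-1}, e_i): if e_i > 0, return (e_i, e_{i-1} - k_i e_i) with
   k_i = floor(e_{i-1}/e_i); once a remainder is 0 the state is frozen. *)
Definition anth_step (p : R * R) : R * R :=
  let: (x, y) := p in
  if 0 < y then (y, x - (Num.truncn (x / y))%:R * y) else (x, y).

(* anth_state a b i = (e_{i-1}, e_i) *)
Definition anth_state (a b : R) (i : nat) : R * R := iter i anth_step (a, b).

(* Anth a b i = Some k_i if the i-th quotient exists (i.e. e_i > 0),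
   and None if the process has stopped before step i. *)
Definition Anth (a b : R) (i : nat) : option nat :=
  let: (x, y) := anth_state a b i in
  if 0 < y then Some (Num.truncn (x / y)) else None.

Definition anth_finite (a b : R) : Prop := exists n, Anth a b n = None.

Definition anth_eventually_periodic (a b : R) : Prop :=
  (forall i, Anth a b i <> None) /\
  exists N p : nat, (1 <= p)%N /\ forall i, (N <= i)%N -> Anth a b (i + p) = Anth a b i.

Definition anth_fin_or_per (a b : R) : Prop :=
  anth_finite a b \/ anth_eventually_periodic a b.

End Anth.

(* Equal anthyphaireses of (a, b) and (e, f) force a : b = e : f, and then
   a : c = d : f since [a f = b e = c d]; anthyphairesis only depends on the
   ratio.  For the first point, the cross determinant [x v - y u] of the two
   states is invariant up to sign, and because both states use the same
   quotient it is bounded by the product [y v] of the current remainders.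
   Remainders at least halve every two steps, so [y v] is at most
   [b f / 4^m] after [2 m] steps and the determinant [a f - b e] vanishes. *)
From HB Require Import structures.
From mathcomp Require Import all_boot all_order all_algebra.
From mathcomp Require Import reals.
From mathcomp Require Import lra ring.
From Stdlib Require Import FunctionalExtensionality.
Import Order.TTheory GRing.Theory Num.Theory.
Local Open Scope ring_scope.

Section Anthyphairesis.
Variable R : realType.
Implicit Types a b e f t x y : R.

Lemma truncn_div_bounds x y : 0 <= x -> 0 < y ->
  (Num.truncn (x / y))%:R * y <= x /\ x < ((Num.truncn (x / y))%:R + 1) * y.
Proof.
move=> hx hy; have /andP[h1 h2] := truncn_itv (divr_ge0 hx (ltW hy)).
split; first by rewrite -ler_pdivlMr.
by rewrite natr1 -ltr_pdivrMr.
Qed.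
Arguments truncn_div_bounds {x y}.

Lemma pow2_bounded_eq0 x y : 0 <= x -> (forall m, x * 2 ^+ m <= y) -> x = 0.
Proof.
move=> hx hm; apply/eqP; rewrite eq_le hx andbT leNgt; apply/negP => x_gt0.
have y_ge0 : 0 <= y by have := hm 0%N; rewrite expr0 mulr1; lra.
have /andP[_ ub] := truncn_itv (divr_ge0 y_ge0 (ltW x_gt0)).
set n := Num.truncn (y / x) in ub.
have n_le : (n.+1%:R : R) <= 2 ^+ n.+1 by rewrite -natrX ler_nat ltnW // ltn_expl.
have : y < x * n.+1%:R by rewrite mulrC -ltr_pdivrMr.
have := hm n.+1; nra.
Qed.

Lemma anth_stateS a b i : anth_state a b i.+1 = anth_step (anth_state a b i).
Proof. by []. Qed.

Lemma anth_stateZ t a b i : 0 < t ->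
  anth_state (t * a) (t * b) i =
  (t * (anth_state a b i).1, t * (anth_state a b i).2).
Proof.
move=> ht; elim: i => [|i IH] //; rewrite !anth_stateS IH.
case: (anth_state a b i) => x y /=; rewrite /anth_step pmulr_rgt0 //.
case: ifP => hy //=.
have -> : t * x / (t * y) = x / y by field; rewrite !gt_eqF.
by congr pair; ring.
Qed.

Lemma AnthZ t a b : 0 < t -> Anth (t * a) (t * b) = Anth a b.
Proof.
move=> ht; apply: functional_extensionality => i.
rewrite /Anth anth_stateZ //; case: (anth_state a b i) => x y /=.
rewrite pmulr_rgt0 //; case: ifP => hy //.
have -> : t * x / (t * y) = x / y by field; rewrite !gt_eqF.
by [].
Qed.

Lemma Anth_eq_of_cross a c d f : 0 < a -> 0 < d -> a * f = c * d ->
  Anth a c = Anth d f.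
Proof.
move=> ha hd E; have t_gt0 : 0 < d / a by rewrite divr_gt0.
have -> : d = d / a * a by rewrite divfK // gt_eqF.
have -> : f = d / a * c.
  by apply: (mulfI (x := a)); rewrite ?gt_eqF // E; field; rewrite gt_eqF.
by rewrite AnthZ.
Qed.

Lemma anth_state_ge0 a b i : 0 <= a -> 0 <= b ->
  0 <= (anth_state a b i).1 /\ 0 <= (anth_state a b i).2.
Proof.
move=> ha hb; elim: i => [|i IH] //; rewrite anth_stateS.
case: (anth_state a b i) IH => x y /= [hx hy]; rewrite /anth_step.
case: ifP => y_gt0 //=; have [h _] := truncn_div_bounds hx y_gt0.
by split=> //; rewrite subr_ge0.
Qed.
Arguments anth_state_ge0 {a b}.

Lemma anth_rem_halves a b i : 0 <= a -> 0 <= b ->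
  (anth_state a b i.+2).2 * 2 <= (anth_state a b i).2.
Proof.
move=> ha hb; have := anth_state_ge0 i ha hb.
rewrite !anth_stateS; case: (anth_state a b i) => x y /= [hx hy].
rewrite /anth_step; case: ifP => y_gt0 /=; last first.
  by rewrite y_gt0 /=; move/negbT: y_gt0; rewrite -leNgt; lra.
have [h1 h2] := truncn_div_bounds hx y_gt0.
set r := x - _ * y; have r_ge0 : 0 <= r by rewrite subr_ge0.
have r_lt : r < y by rewrite /r; lra.
case: ifP => r_gt0 /=; last by move/negbT: r_gt0; rewrite -leNgt; lra.
have [h3 h4] := truncn_div_bounds (ltW y_gt0) r_gt0.
case: (Num.truncn (y / r)) h3 h4 => [|n] h3 h4; first by lra.
have : 1 <= n.+1%:R :> R by rewrite ler1n.
set s := n.+1%:R in h3 h4 *; nra.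
Qed.
Arguments anth_rem_halves {a b}.

Lemma anth_rem_geometric a b m : 0 <= a -> 0 <= b ->
  (anth_state a b m.*2).2 * 2 ^+ m <= b.
Proof.
move=> ha hb; elim: m => [|m IH]; first by rewrite expr0 mulr1.
rewrite doubleS exprS.
have := anth_rem_halves m.*2 ha hb; have := exprn_gt0 m (ltr0Sn R 1).
set y := (anth_state a b m.*2).2 in IH *; nra.
Qed.
Arguments anth_rem_geometric {a b}.

Section EqualAnth.
Variables a b e f : R.
Hypothesis hA : Anth a b = Anth e f.

Lemma anth_cross_invariant i :
  `|(anth_state a b i).1 * (anth_state e f i).2 -
    (anth_state a b i).2 * (anth_state e f i).1| = `|a * f - b * e|.
Proof.
elim: i => [|i IH] //; rewrite !anth_stateS; move: IH.
have := congr1 (fun g => g i) hA; rewrite /Anth /=.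
case: (anth_state a b i) => x y; case: (anth_state e f i) => u v /= HA IH.
move: HA; rewrite /anth_step; case: ifP => hy; case: ifP => hv //= [] <-.
by rewrite -IH -normrN; congr `|_|; ring.
Qed.

Hypotheses (ha : 0 <= a) (hb : 0 <= b) (he : 0 <= e) (hf : 0 <= f).

(* With [x = k y + r] and [u = k v + s], the determinant is [r v - y s]. *)
Lemma anth_cross_le_rem i :
  `|(anth_state a b i).1 * (anth_state e f i).2 -
    (anth_state a b i).2 * (anth_state e f i).1|
  <= (anth_state a b i).2 * (anth_state e f i).2.
Proof.
have := congr1 (fun g => g i) hA; rewrite /Anth /=.
have := anth_state_ge0 i ha hb; have := anth_state_ge0 i he hf.
case: (anth_state a b i) => x y; case: (anth_state e f i) => u v /= [hu hv] [hx hy].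
case: ifP => y_gt0; case: ifP => v_gt0 //; [case=> k_eq | move=> _].
  have [h1 h2] := truncn_div_bounds hx y_gt0.
  have [h3 h4] := truncn_div_bounds hu v_gt0.
  rewrite k_eq in h1 h2; set k := (Num.truncn (u / v))%:R in h1 h2 h3 h4.
  by rewrite ler_norml; apply/andP; split; nra.
move/negbT: y_gt0; move/negbT: v_gt0; rewrite -!leNgt => v_le0 y_le0.
have -> : y = 0 by lra.
have -> : v = 0 by lra.
by rewrite !(mulr0, mul0r) subr0 normr0.
Qed.

Lemma Anth_eq_cross : a * f = b * e.
Proof.
apply/eqP; rewrite -subr_eq0 -normr_eq0; apply/eqP.
apply: (@pow2_bounded_eq0 _ (b * f)) => // m.
have hP : 1 <= 2 ^+ m :> R by apply: exprn_ege1; lra.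
have By := anth_rem_geometric m ha hb; have Bv := anth_rem_geometric m he hf.
have := anth_cross_le_rem m.*2; rewrite anth_cross_invariant.
have := anth_state_ge0 m.*2 ha hb; have := anth_state_ge0 m.*2 he hf.
set y := (anth_state a b _).2 in By *; set v := (anth_state e f _).2 in Bv *.
set D := `|_|; have : 0 <= D by apply: normr_ge0.
set P := 2 ^+ m in hP By Bv * => D_ge0 [_ v_ge0] [_ y_ge0] D_le.
have DP : D * P <= D * (P * P) by apply: ler_wpM2l => //; nra.
have DPP : D * (P * P) <= (y * P) * (v * P).
  by rewrite mulrACA ler_wpM2r //; nra.
apply: le_trans DP _; apply: le_trans DPP _.
by apply: ler_pM => //; nra.
Qed.

End EqualAnth.
End Anthyphairesis.

Theorem proposition10p2p8 (R : realType) (a b c d e f : R) :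
  0 < a -> 0 < b -> 0 < c -> 0 < d -> 0 < e -> 0 < f ->
  anth_fin_or_per a b -> anth_fin_or_per e f ->
  anth_fin_or_per b c -> anth_fin_or_per d e ->
  anth_fin_or_per a c -> anth_fin_or_per d f ->
  Anth a b = Anth e f -> Anth b c = Anth d e ->
  Anth a c = Anth d f.
Proof.
move=> ha hb hc hd he hf _ _ _ _ _ _ hab hbc.
have E1 := @Anth_eq_cross R _ _ _ _ hab (ltW ha) (ltW hb) (ltW he) (ltW hf).
have E2 := @Anth_eq_cross R _ _ _ _ hbc (ltW hb) (ltW hc) (ltW hd) (ltW he).
by apply: Anth_eq_of_cross ha hd _; rewrite E1 E2.
Qed.
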